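(* In the certification market, the welfare-optimal menu of certificates offers every threshold certification level $q\in(0,1]$ at transfer $c$ and level $0$ at transfer $0$; i.e., this menu maximizes $\operatorname{Wel}(M)$ over all menus $M$.
   Context: Certification market: producers with types $\psi$ (atomless distribution $G$, compact support), consumers with types $\phi$ (atomless distribution $F$, compact support), quality $q\in[0,1]$; cost $g(q;\psi)$ weakly convex non-decreasing in $q$, $g(0;\psi)=0$; value $f(q;\phi)$ weakly concave non-decreasing in $q$, $f(0;\phi)=0$, $0\le f\le1$; strict single-crossing: for $\phi_1<\phi_2$, $q_1<q_2$: $f(q_2;\phi_2)-f(q_1;\phi_2)>f(q_2;\phi_1)-f(q_1;\phi_1)$, and for $\psi_1<\psi_2$, $q_1<q_2$: $g(q_2;\psi_2)-g(q_1;\psi_2)<g(q_2;\psi_1)-g(q_1;\psi_1)$. Quality is unobservable to consumers except through certificates. The certifier offers a menu $M=\{(q_i,t_i)\}$ of threshold certificates $[q_i,1]$ with transfers $t_i$ (always including $(0,0)$) and incurs a verification cost $c\ge0$ for each non-trivial certificate issued; a producer choosing threshold $q_i$ produces at quality $q_i$. Producers choose certificates in equilibrium and trade with consumers in a competitive (Walrasian) market equilibrium; in equilibrium, producer $\psi$ trades with consumer $\phi(\psi)$ defined by $F(\phi(\psi))=G(\psi)$ and picks the menu item maximizing $f(q_i;\phi(\psi))-g(q_i;\psi)-t_i$. $\operatorname{Wel}(M)$ is the sum of utilities of consumers, producers and the certifier (the certifier's utility being transfers received minus verification costs) in the equilibrium outcome under $M$; transfers cancel, so $\operatorname{Wel}(M)=\int[f(q(\psi);\phi(\psi))-g(q(\psi);\psi)-c\cdot\mathbf{1}\{q(\psi)>0\}]\,dG(\psi)$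 where $q(\psi)$ is the level chosen by $\psi$. *)

From HB Require Import structures.
From mathcomp Require Import all_boot all_order all_algebra.
From mathcomp Require Import all_classical all_reals all_analysis.
Set Implicit Arguments. Unset Strict Implicit. Unset Printing Implicit Defensive.
Import Order.TTheory GRing.Theory Num.Theory.
Import numFieldNormedType.Exports.
Local Open Scope classical_set_scope.
Local Open Scope ring_scope.

Section Certification.
Variable R : realType.

Definition qint : set R := `[0, 1].

Definition atomless (P : probability R R) : Prop :=
  forall x : R, P [set x] = 0%E.

Definition compact_support (P : probability R R) : Prop :=
  exists a b : R, P `[a, b]%classic = 1%E.

Definition distr_fun (P : probability R R) (x : R) : \bar R := P `]-oo, x]%classic.

Definition convex_on01 (h : R -> R) : Prop :=
  forall x y t, x \in `[0, 1] -> y \in `[0, 1] -> t \in `[0, 1] ->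
    h (t * x + (1 - t) * y) <= t * h x + (1 - t) * h y.

Definition concave_on01 (h : R -> R) : Prop :=
  forall x y t, x \in `[0, 1] -> y \in `[0, 1] -> t \in `[0, 1] ->
    t * h x + (1 - t) * h y <= h (t * x + (1 - t) * y).

Definition nondecr_on01 (h : R -> R) : Prop :=
  forall x y, x \in `[0, 1] -> y \in `[0, 1] -> x <= y -> h x <= h y.

Definition cost_ok (g : R -> R -> R) : Prop :=
  (forall psi, convex_on01 (g ^~ psi)) /\
  (forall psi, nondecr_on01 (g ^~ psi)) /\
  (forall psi, g 0 psi = 0) /\
  (forall psi1 psi2 q1 q2, psi1 < psi2 -> q1 \in `[0, 1] -> q2 \in `[0, 1] ->
     q1 < q2 -> g q2 psi2 - g q1 psi2 < g q2 psi1 - g q1 psi1).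

Definition value_ok (f : R -> R -> R) : Prop :=
  (forall phi, concave_on01 (f ^~ phi)) /\
  (forall phi, nondecr_on01 (f ^~ phi)) /\
  (forall phi, f 0 phi = 0) /\
  (forall phi q, q \in `[0, 1] -> 0 <= f q phi <= 1) /\
  (forall phi1 phi2 q1 q2, phi1 < phi2 -> q1 \in `[0, 1] -> q2 \in `[0, 1] ->
     q1 < q2 -> f q2 phi2 - f q1 phi2 > f q2 phi1 - f q1 phi1).

Definition menu (M : set (R * R)) : Prop :=
  M (0, 0) /\ forall m, M m -> m.1 \in `[0, 1].

Definition Mstar (c : R) : set (R * R) :=
  [set m | (m.1 = 0 /\ m.2 = 0) \/ ((0 < m.1 <= 1) /\ m.2 = c)].

Definition item_util (f g : R -> R -> R) (phi : R -> R) (psi : R) (m : R * R) : R :=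
  f m.1 (phi psi) - g m.1 psi - m.2.

Definition equilibrium (G : probability R R) (f g : R -> R -> R) (phi : R -> R)
    (M : set (R * R)) (s : R -> R * R) : Prop :=
  {ae G, forall psi, M (s psi) /\
     forall m, M m -> item_util f g phi psi m <= item_util f g phi psi (s psi)}.

Definition wel_integrand (f g : R -> R -> R) (phi : R -> R) (c : R)
    (s : R -> R * R) (psi : R) : R :=
  f (s psi).1 (phi psi) - g (s psi).1 psi - c * (if (s psi).1 > 0 then 1 else 0).

(* Wel = integral over G of the welfare integrand (transfers cancel). *)
Definition Wel (G : probability R R) (f g : R -> R -> R) (phi : R -> R) (c : R)
    (s : R -> R * R) : \bar R :=
  (\int[G]_(psi in setT) (wel_integrand f g phi c s psi)%:E)%E.

End Certification.

From HB Require Import structures.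
From mathcomp Require Import all_boot all_order all_algebra.
From mathcomp Require Import all_classical all_reals all_analysis measurable_realfun.
Import Order.TTheory GRing.Theory Num.Theory.
Local Open Scope classical_set_scope.
Local Open Scope ring_scope.

(* Under the menu Mstar = {(0,0)} ∪ {(q,c) : 0 < q <= 1} the
   certifier's transfer c for a non-trivial certificate exactly offsets its
   verification cost c, so the welfare produced by a producer coincides with
   the producer's own utility from the chosen item.  Consequently:
   - an Mstar-equilibrium choice yields non-negative welfare (the producer can
     always take (0,0));
   - for any menu M and any item (q,t) of M, the welfare
     f(q) - g(q) - c 1{q > 0} is the producer's utility from the item
     (q,c) or (0,0) of Mstar, hence is dominated by the welfare of the
     Mstar-equilibrium choice.
   So the welfare integrand under Mstar dominates the one under M, and is
   non-negative, almost everywhere.  A general fact about Lebesgue integrals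
   of extended-real functions (a.e. domination by an a.e. non-negative
   function implies comparison of integrals, without any integrability
   assumption) then gives Wel(M) <= Wel(Mstar). *)

Section IntegralComparison.
Context d (T : measurableType d) (R : realType).
Variables (mu : {measure set T -> \bar R}) (D : set T).
Hypothesis mD : measurable D.
Local Open Scope ereal_scope.

Lemma integral_le_funepos (u : T -> \bar R) :
  \int[mu]_(x in D) u x <= \int[mu]_(x in D) u^\+ x.
Proof.
rewrite (integralE mu D u) -[leRHS]adde0; apply: leeD2l.
by rewrite oppe_le0 integral_ge0.
Qed.

Lemma ae_ge0_integral_funepos {v : T -> \bar R} :
  measurable_fun D v -> {ae mu, forall x, D x -> 0 <= v x} ->
  \int[mu]_(x in D) v x = \int[mu]_(x in D) v^\+ x.
Proof.
move=> mv v_ge0; rewrite (integralE mu D v).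
suff -> : \int[mu]_(x in D) v^\- x = 0 by rewrite sube0.
apply/eqP; rewrite eq_le integral_ge0 // andbT -(integral0 mu D).
apply: ae_ge0_le_integral => //; first exact: measurable_funeneg.
apply: filterS v_ge0 => x vx_ge0 Dx.
by rewrite funenegE ge_max lexx andbT oppe_le0 vx_ge0.
Qed.

Lemma ae_le_integral_ge0_dom (u v : T -> \bar R) :
  measurable_fun D u -> measurable_fun D v ->
  {ae mu, forall x, D x -> 0 <= v x /\ u x <= v x} ->
  \int[mu]_(x in D) u x <= \int[mu]_(x in D) v x.
Proof.
move=> mfu mfv uv.
have v_ge0 : {ae mu, forall x, D x -> 0 <= v x}.
  by apply: filterS uv => x uvx Dx; have [] := uvx Dx.
rewrite (ae_ge0_integral_funepos mfv v_ge0).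
apply: le_trans (integral_le_funepos u) _.
apply: ae_ge0_le_integral => //; [exact: measurable_funepos..|].
apply: filterS uv => x uvx Dx; have [_ le_uv] := uvx Dx.
by rewrite !funeposE ge_max !le_max le_uv lexx !orbT.
Qed.

End IntegralComparison.

Section PointwiseWelfare.
Context {R : realType} {f g : R -> R -> R} {phi : R -> R} {c : R}.
Hypotheses (f0 : forall phi, f 0 phi = 0) (g0 : forall psi, g 0 psi = 0).

(* Under Mstar, the transfer offsets the verification cost: the welfare of a
   producer equals its utility from the item it holds. *)
Lemma wel_integrand_Mstar {s : R -> R * R} {psi : R} : Mstar c (s psi) ->
  wel_integrand f g phi c s psi = item_util f g phi psi (s psi).
Proof.
rewrite /wel_integrand /item_util => -[[-> ->]|[/andP[q_gt0 _] ->]].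
  by rewrite ltxx mulr0.
by rewrite q_gt0 mulr1.
Qed.

Lemma Mstar_choice_ge0 {psi : R} {m : R * R} :
  (forall m', Mstar c m' -> item_util f g phi psi m' <= item_util f g phi psi m) ->
  0 <= item_util f g phi psi m.
Proof.
move=> m_opt; have := m_opt (0, 0) (or_introl (conj erefl erefl)).
by rewrite /item_util /= f0 g0 !subr0.
Qed.

(* The welfare of any level q in [0,1] is the utility of an item of Mstar:
   (q,c) if q > 0, and (0,0) otherwise; hence it is dominated by the
   utility of an optimal item of Mstar. *)
Lemma wel_integrand_le_Mstar_choice {s : R -> R * R} {psi : R} {m : R * R} :
  (s psi).1 \in `[0, 1] ->
  (forall m', Mstar c m' -> item_util f g phi psi m' <= item_util f g phi psi m) ->
  wel_integrand f g phi c s psi <= item_util f g phi psi m.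
Proof.
rewrite in_itv /= => /andP[q_ge0 q_le1] m_opt; rewrite /wel_integrand.
case: ifPn => q_pos.
  rewrite mulr1; apply: (m_opt ((s psi).1, c)).
  by right; split => //; apply/andP.
have -> : (s psi).1 = 0 by apply/eqP; rewrite eq_le q_ge0 andbT leNgt.
by rewrite f0 g0 !subr0 mulr0 subr0; apply: Mstar_choice_ge0 m_opt.
Qed.

End PointwiseWelfare.

Theorem theorem2 (R : realType) (G F : probability R R)
    (f g : R -> R -> R) (c : R) (phi : R -> R) :
  atomless G -> compact_support G ->
  atomless F -> compact_support F ->
  value_ok f -> cost_ok g -> 0 <= c ->
  (forall psi, distr_fun F (phi psi) = distr_fun G psi) ->
  forall (M : set (R * R)) (s sstar : R -> R * R),
    menu M ->
    equilibrium G f g phi M s ->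
    equilibrium G f g phi (Mstar c) sstar ->
    measurable_fun setT (wel_integrand f g phi c s) ->
    measurable_fun setT (wel_integrand f g phi c sstar) ->
    (Wel G f g phi c s <= Wel G f g phi c sstar)%E.
Proof.
move=> _ _ _ _ [_ [_ [f0 _]]] [_ [_ [g0 _]]] _ _ M s sstar [_ M_levels]
  eq_s eq_sstar ms msstar.
apply: ae_le_integral_ge0_dom => //; [exact/measurable_EFinP..|].
apply: filterS2 eq_s eq_sstar => psi [Ms _] [Msstar sstar_opt] _.
rewrite !lee_fin (wel_integrand_Mstar Msstar); split.
- exact: (Mstar_choice_ge0 f0 g0 sstar_opt).
- exact: (wel_integrand_le_Mstar_choice f0 g0 (M_levels _ Ms) sstar_opt).
Qed.
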